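(* Under the model assumptions in the context, suppose the distribution of $\mathbf W$ is $p_{\mathbf W}(\cdot;\boldsymbol\psi^* )$ where $\boldsymbol\psi^*\in\Theta_{\boldsymbol\psi}$ satisfies $\pi^1<\dots<\pi^J$ and conditions ID$(k)$ for some integer $k\ge1$ with $T_0\ge k+1$, $T\ge2(k+1)$. Then for each $t\ge T_0+1$ and each $j\in\{1,\dots,J\}$, \[ \boldsymbol\mu^{\mathrm{ATT},j}_t=\sum_{\mathbf x_{T_0}\in\mathcal X}\Pr(\mathbf X_{T_0}=\mathbf x_{T_0}\mid D=1,Z=j)\Big(\mathbb{E}[\mathbf X_t\mid \mathbf X_{T_0}=\mathbf x_{T_0},D=1,Z=j]-\mathbb{E}[\mathbf X_t\mid \mathbf X_{T_0}=\mathbf x_{T_0},D=0,Z=j]\Big), \] and $\boldsymbol\mu^{\mathrm{ATT},j}_t$ is uniquely determined by the pmf $\{p_{\mathbf W}(\mathbf w;\boldsymbol\psi^* ):\mathbf w\in\mathcal X^T\times\{0,1\}\}$.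
   Context: Fix integers $K\ge2$, $J\ge1$, $T_0\ge1$, $T>T_0$, $\mathcal X=\{x\in\{0,1\}^K:\sum_k x^{(k)}=1\}$. A unit has latent type $Z\in\{1,\dots,J\}$, treatment indicator $D\in\{0,1\}$ (treated units untreated in periods $\le T_0$, treated afterwards), potential outcomes $\mathbf X_t(0),\mathbf X_t(1)\in\mathcal X$, $t=1,\dots,T$; observed $\mathbf X_t=\mathbf X_t(0)$ for $t\le T_0$, $\mathbf X_t=D\mathbf X_t(1)+(1-D)\mathbf X_t(0)$ for $t>T_0$, $\mathbf W=(\mathbf X_1,\dots,\mathbf X_T,D)$, $\mathbf X_1^{T_0}=(\mathbf X_1,\dots,\mathbf X_{T_0})$. LTATT: $\boldsymbol\mu^{\mathrm{ATT},j}_t=\mathbb{E}[\mathbf X_t(1)-\mathbf X_t(0)\mid D=1,Z=j]$. Model assumptions: no anticipation $\mathbf X_t(1)=\mathbf X_t(0)$ for $t\le T_0$; transition independence conditional on types: for $t\ge T_0+1$, all $\mathbf x_t$, $\mathbf x_1^{T_0}$, $j$, $\Pr(\mathbf X_t(0)=\mathbf x_t\mid\mathbf X_1^{T_0}=\mathbf x_1^{T_0},D=0,Z=j)=\Pr(\mathbf X_t(0)=\mathbf x_t\mid\mathbf X_1^{T_0}=\mathbf x_1^{T_0},D=1,Z=j)$; common support: there is $\epsilon>0$ with $\epsilon\le\Pr(D=1\mid\mathbf X_1^{T_0}=\mathbf x_1^{T_0},Z=j)\le1-\epsilon$ for all $\mathbf x_1^{T_0}$, $j$; first-order Markov: for each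 $j$ and $d$, $\Pr(\mathbf X_t(d)\mid\mathbf X_1(d),\dots,\mathbf X_{t-1}(d),D=d,Z=j)=\Pr(\mathbf X_t(d)\mid\mathbf X_{t-1}(d),D=d,Z=j)$ for $t=2,\dots,T$. The number of types $J$ is known. Parametrization: $\boldsymbol\psi=(\boldsymbol\pi,\boldsymbol\varphi^1,\dots,\boldsymbol\varphi^J)$ with $\pi^j=\Pr(Z=j)$ and $\boldsymbol\varphi^j$ consisting of $p^j_{\mathbf X_1(0),D}(x,d)=\Pr(\mathbf X_1(0)=x,D=d\mid Z=j)$, $p^j_{\mathbf X_t(0)|\mathbf X_{t-1}(0)}(x|x')=\Pr(\mathbf X_t(0)=x\mid\mathbf X_{t-1}(0)=x',Z=j)$ ($t=2,\dots,T$) and $p^j_{\mathbf X_t(1)|\mathbf X_{t-1}(1)}(x|x')$ ($t=T_0+1,\dots,T$) defined analogously. $\Theta_{\boldsymbol\psi}$: such $\boldsymbol\psi$ with $\sum_j\pi^j=1$, $\epsilon\le\pi^j\le1-\epsilon$. The pmf of $\mathbf W$ is $p_{\mathbf W}(\mathbf w;\boldsymbol\psi)=\sum_j\pi^jp^j_{\mathbf W}(\mathbf w;\boldsymbol\varphi^j)$, where for $\mathbf w=(x_1,\dots,x_T,d)$, $p^j_{\mathbf W}=p^j_{\mathbf X_1(0),D}(x_1,0)\prod_{t=2}^Tp^j_{\mathbf X_t(0)|\mathbf X_{t-1}(0)}(x_t|x_{t-1})$ if $d=0$ and $p^j_{\mathbf X_1(0),D}(x_1,1)\prod_{t=2}^{T_0}p^j_{\mathbf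 X_t(0)|\mathbf X_{t-1}(0)}(x_t|x_{t-1})\prod_{t=T_0+1}^Tp^j_{\mathbf X_t(1)|\mathbf X_{t-1}(1)}(x_t|x_{t-1})$ if $d=1$. Conditions ID$(k)$ on $\boldsymbol\psi$: for $\xi_1=(x_1,\dots,x_k)\in\mathcal X^k$, $P^j_1(\xi_1,d)=p^j_{\mathbf X_1(0),D}(x_1,d)\prod_{t=2}^kp^j_{\mathbf X_t(0)|\mathbf X_{t-1}(0)}(x_t|x_{t-1})$, $\tau^j(\xi_1,d)=\pi^jP^j_1(\xi_1,d)/\sum_m\pi^mP^m_1(\xi_1,d)$; $q^j_{21}(\xi_2|\xi_1)=p^j_{\mathbf X_{k+1}(0)|\mathbf X_k(0)}(\xi_2|x_k)$, $q^j_{32}(\xi_3|\xi_2)=p^j_{\mathbf X_{k+2}(0)|\mathbf X_{k+1}(0)}(\xi_3|\xi_2)$ for $\xi_2,\xi_3\in\mathcal X$; $q^j_{43}(\xi_4|\xi_3)=\prod_{t=k+3}^Tp^j_{\mathbf X_t(0)|\mathbf X_{t-1}(0)}(x_t|x_{t-1})$ for $\xi_4=(x_{k+3},\dots,x_T)$, $x_{k+2}=\xi_3$; $\lambda^j_1(\xi_2|\xi_1)=\tau^j(\xi_1,0)q^j_{21}(\xi_2|\xi_1)$. Given $a_1,\dots,a_J\in\mathcal X^k$, $b_1,\dots,b_{J-1}\in\mathcal X^{T-k-2}$: $\bar L_{\xi_2}=[\lambda^j_1(\xi_2|a_i)]_{i,j}$; $L_{\xi_3}$ is the $J\times J$ matrix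 with first row all ones and $(i+1,j)$ entry $q^j_{43}(b_i|\xi_3)$; $D_{\xi_3|\xi_2}=\mathrm{diag}_j(q^j_{32}(\xi_3|\xi_2))$. (a) There is $\xi_3^*\in\mathcal X$ such that for every $\xi_3\in\mathcal X$ there exist $\check\xi_2,\bar\xi_2,\bar\xi_3\in\mathcal X$, $a_i$, $b_i$ with (i) $\bar L_{\check\xi_2},\bar L_{\bar\xi_2},L_{\xi_3},L_{\xi_3^*},L_{\bar\xi_3}$ nonsingular, (ii) the diagonal entries of $D_{\xi_3|\check\xi_2}D_{\bar\xi_3|\check\xi_2}^{-1}D_{\bar\xi_3|\bar\xi_2}D_{\xi_3|\bar\xi_2}^{-1}$ pairwise distinct; (b) all $q^j_{32}$ and $q^j_{43}$ values are positive; (c) for every $\xi_1$ there are $c_1,\dots,c_J\in\mathcal X$ with $[q^j_{21}(c_i|\xi_1)]_{i,j}$ nonsingular; (d) for every $\xi_2$ there are $e_1,\dots,e_J\in\mathcal X^k$ with $[\tau^j(e_i,1)q^j_{21}(\xi_2|e_i)]_{i,j}$ nonsingular. *)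

From HB Require Import structures.
From mathcomp Require Import all_boot all_order all_algebra.
Unset Printing Implicit Defensive.
Import Order.TTheory GRing.Theory Num.Theory.
Local Open Scope ring_scope.

(* Conventions.
   - A state x in calX = {one-hot vectors in {0,1}^K} is represented by the
     index k : 'I_K of its unique 1; [onehot x] is the vector itself (a row
     vector in R^K).
   - Latent type j in {1..J} is represented by j : 'I_J (type j+1).
   - Time periods are natural numbers t = 1..T (values at other indices are
     irrelevant).
   - A (finite) probability space: a finite type Om with pmf P; random
     variables Z, D, X_t(0), X_t(1) are functions on Om.
   - Division by 0 is 0 (MathComp convention) in conditional probabilities. *)

Record model (R : realFieldType) (K J : nat) := Model {
  Om : finType;
  Pm : Om -> R;
  Zm : Om -> 'I_J;
  Dm : Om -> bool;
  X0m : nat -> Om -> 'I_K;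
  X1m : nat -> Om -> 'I_K
}.
Arguments Om {R K J} m.
Arguments Pm {R K J} m _.
Arguments Zm {R K J} m _.
Arguments Dm {R K J} m _.
Arguments X0m {R K J} m _ _.
Arguments X1m {R K J} m _ _.

Section ModelDefs.
Context {R : realFieldType} {K J : nat}.
Variables T0 T : nat.

Definition onehot (x : 'I_K) : 'rV[R]_K := \row_i (i == x)%:R.

Definition Xpot (M : model R K J) (d : bool) : nat -> Om M -> 'I_K :=
  if d then X1m M else X0m M.

Definition Xobs (M : model R K J) (t : nat) (w : Om M) : 'I_K :=
  if (t <= T0)%N then X0m M t w else if Dm M w then X1m M t w else X0m M t w.

Definition Pr (M : model R K J) (A : pred (Om M)) : R := \sum_(w | A w) Pm M w.

Definition cPr (M : model R K J) (A B : pred (Om M)) : R :=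
  Pr M (fun w => A w && B w) / Pr M B.

Definition cE (M : model R K J) (f : Om M -> 'rV[R]_K) (B : pred (Om M)) : 'rV[R]_K :=
  (Pr M B)^-1 *: \sum_(w | B w) Pm M w *: f w.

Definition hist {O : finType} (Y : nat -> O -> 'I_K) (n : nat) (h : nat -> 'I_K) : pred O :=
  fun w => [forall i : 'I_n, Y i.+1 w == h i.+1].

Definition prob_ok (M : model R K J) :=
  (forall w, 0 <= Pm M w) /\ \sum_w Pm M w = 1.

Definition no_anticipation (M : model R K J) :=
  forall t, (1 <= t <= T0)%N -> forall w, 0 < Pm M w -> X1m M t w = X0m M t w.

Definition trans_indep (M : model R K J) :=
  forall t, (T0 < t <= T)%N -> forall (x : 'I_K) (h : nat -> 'I_K) (j : 'I_J),
    cPr M (fun w => X0m M t w == x)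
          (fun w => [&& hist (Xobs M) T0 h w, ~~ Dm M w & Zm M w == j])
  = cPr M (fun w => X0m M t w == x)
          (fun w => [&& hist (Xobs M) T0 h w, Dm M w & Zm M w == j]).

Definition common_support (M : model R K J) :=
  exists e : R, 0 < e /\ forall (h : nat -> 'I_K) (j : 'I_J),
    e <= cPr M (fun w => Dm M w) (fun w => hist (Xobs M) T0 h w && (Zm M w == j)) <= 1 - e.

Definition markov (M : model R K J) :=
  forall (d : bool) (j : 'I_J) (t : nat), (2 <= t <= T)%N -> forall h : nat -> 'I_K,
    0 < Pr M (fun w => [&& hist (Xpot M d) t.-1 h w, Dm M w == d & Zm M w == j]) ->
    cPr M (fun w => Xpot M d t w == h t)
          (fun w => [&& hist (Xpot M d) t.-1 h w, Dm M w == d & Zm M w == j])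
  = cPr M (fun w => Xpot M d t w == h t)
          (fun w => [&& Xpot M d t.-1 w == h t.-1, Dm M w == d & Zm M w == j]).

Definition model_assumptions (M : model R K J) :=
  [/\ prob_ok M, no_anticipation M, trans_indep M, common_support M & markov M].

Definition LTATT (M : model R K J) (t : nat) (j : 'I_J) : 'rV[R]_K :=
  cE M (fun w => onehot (X1m M t w) - onehot (X0m M t w))
       (fun w => Dm M w && (Zm M w == j)).

End ModelDefs.

Record param (R : realFieldType) (K J : nat) := Param {
  pi_ : 'I_J -> R;
  p1_ : 'I_J -> 'I_K -> bool -> R;          (* p^j_{X_1(0),D}(x,d) *)
  q0_ : 'I_J -> nat -> 'I_K -> 'I_K -> R;   (* q0_ j t x x' = p^j_{X_t(0)|X_{t-1}(0)}(x|x') *)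
  q1_ : 'I_J -> nat -> 'I_K -> 'I_K -> R    (* q1_ j t x x' = p^j_{X_t(1)|X_{t-1}(1)}(x|x') *)
}.
Arguments pi_ {R K J} p _.
Arguments p1_ {R K J} p _ _ _.
Arguments q0_ {R K J} p _ _ _ _.
Arguments q1_ {R K J} p _ _ _ _.

Section ParamDefs.
Context {R : realFieldType} {K J : nat}.
Variables T0 T : nat.

Definition in_Theta (eps : R) (psi : param R K J) :=
  [/\ \sum_j pi_ psi j = 1,
      forall j, eps <= pi_ psi j <= 1 - eps,
      forall j, (forall x d, 0 <= p1_ psi j x d) /\ \sum_x \sum_(d : bool) p1_ psi j x d = 1,
      forall j t, (2 <= t <= T)%N -> forall x',
        (forall x, 0 <= q0_ psi j t x x') /\ \sum_x q0_ psi j t x x' = 1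
    & forall j t, (T0 < t <= T)%N -> forall x',
        (forall x, 0 <= q1_ psi j t x x') /\ \sum_x q1_ psi j t x x' = 1].

(* p^j_W(w; phi^j), w = (h 1, ..., h T, d) *)
Definition pWj (psi : param R K J) (j : 'I_J) (h : nat -> 'I_K) (d : bool) : R :=
  if d then
    p1_ psi j (h 1%N) true
    * \prod_(2 <= t < T0.+1) q0_ psi j t (h t) (h t.-1)
    * \prod_(T0.+1 <= t < T.+1) q1_ psi j t (h t) (h t.-1)
  else
    p1_ psi j (h 1%N) false * \prod_(2 <= t < T.+1) q0_ psi j t (h t) (h t.-1).

Definition pW (psi : param R K J) (h : nat -> 'I_K) (d : bool) : R :=
  \sum_j pi_ psi j * pWj psi j h d.

Variable k : nat.

Definition P1 (psi : param R K J) (j : 'I_J) (xi1 : nat -> 'I_K) (d : bool) : R :=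
  p1_ psi j (xi1 1%N) d * \prod_(2 <= t < k.+1) q0_ psi j t (xi1 t) (xi1 t.-1).

Definition tau (psi : param R K J) (j : 'I_J) (xi1 : nat -> 'I_K) (d : bool) : R :=
  pi_ psi j * P1 psi j xi1 d / \sum_m pi_ psi m * P1 psi m xi1 d.

Definition q21 (psi : param R K J) (j : 'I_J) (xi2 : 'I_K) (xi1 : nat -> 'I_K) : R :=
  q0_ psi j k.+1 xi2 (xi1 k).

Definition q32 (psi : param R K J) (j : 'I_J) (xi3 xi2 : 'I_K) : R :=
  q0_ psi j k.+2 xi3 xi2.

(* xi4 = (x_{k+3}, ..., x_T) given by xi4 t, and x_{k+2} = xi3 *)
Definition q43 (psi : param R K J) (j : 'I_J) (xi4 : nat -> 'I_K) (xi3 : 'I_K) : R :=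
  \prod_(k.+3 <= t < T.+1)
     q0_ psi j t (xi4 t) (if t == k.+3 then xi3 else xi4 t.-1).

Definition lambda1 (psi : param R K J) (j : 'I_J) (xi2 : 'I_K) (xi1 : nat -> 'I_K) : R :=
  tau psi j xi1 false * q21 psi j xi2 xi1.

Definition Lbar (psi : param R K J) (a : 'I_J -> nat -> 'I_K) (xi2 : 'I_K) : 'M[R]_J :=
  \matrix_(i, j) lambda1 psi j xi2 (a i).

Definition Lmat (psi : param R K J) (b : nat -> nat -> 'I_K) (xi3 : 'I_K) : 'M[R]_J :=
  \matrix_(i, j) (if (i == 0 :> nat) then 1 else q43 psi j (b (i : nat)) xi3).

Definition Dmat (psi : param R K J) (xi3 xi2 : 'I_K) : 'M[R]_J :=
  diag_mx (\row_j q32 psi j xi3 xi2).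

Definition ID (psi : param R K J) :=
  [/\
      (exists xi3s : 'I_K, forall xi3 : 'I_K,
        exists (xi2c xi2b xi3b : 'I_K) (a : 'I_J -> nat -> 'I_K) (b : nat -> nat -> 'I_K),
          [/\ Lbar psi a xi2c \in unitmx /\ Lbar psi a xi2b \in unitmx,
              Lmat psi b xi3 \in unitmx, Lmat psi b xi3s \in unitmx,
              Lmat psi b xi3b \in unitmx &
              let Mx := Dmat psi xi3 xi2c *m invmx (Dmat psi xi3b xi2c)
                        *m Dmat psi xi3b xi2b *m invmx (Dmat psi xi3 xi2b) in
              forall j1 j2 : 'I_J, Mx j1 j1 = Mx j2 j2 -> j1 = j2]),
      (forall j xi3 xi2, 0 < q32 psi j xi3 xi2) /\ (forall j xi4 xi3, 0 < q43 psi j xi4 xi3),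
      (forall xi1 : nat -> 'I_K, exists c : 'I_J -> 'I_K,
          \matrix_(i, j) q21 psi j (c i) xi1 \in unitmx)
    &
      (forall xi2 : 'I_K, exists e : 'I_J -> nat -> 'I_K,
          \matrix_(i, j) (tau psi j (e i) true * q21 psi j xi2 (e i)) \in unitmx)].

End ParamDefs.

(* The data-generating process M has parameter psi: the joint law of (Z, W)
   is Pr(Z = j, W = w) = pi^j p^j_W(w; phi^j)  (so that the distribution of W is
   p_W(.; psi), pi^j = Pr(Z = j) and phi^j parametrizes W | Z = j). *)
Definition generated_by {R : realFieldType} {K J : nat} (T0 T : nat)
    (M : model R K J) (psi : param R K J) :=
  forall (j : 'I_J) (h : nat -> 'I_K) (d : bool),
    Pr M (fun w => [&& Zm M w == j, hist (Xobs T0 M) T h w & Dm M w == d])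
    = pi_ psi j * pWj T0 T psi j h d.

Definition prop6_hyps {R : realFieldType} {K J : nat} (T0 T : nat) (eps : R)
    (M : model R K J) (psi : param R K J) (k : nat) :=
  [/\ model_assumptions T0 T M,
      in_Theta T0 T eps psi,
      (forall i j : 'I_J, (i < j)%N -> pi_ psi i < pi_ psi j),
      generated_by T0 T M psi
    & [/\ (1 <= k)%N, (k.+1 <= T0)%N, (2 * k.+1 <= T)%N & ID T k psi]].

From HB Require Import structures.
From mathcomp Require Import all_boot all_order all_algebra.
From mathcomp Require Import zify ring lra.
Import Order.TTheory GRing.Theory Num.Theory.
Local Open Scope ring_scope.

(* Under [generated_by] the joint law of (Z, W) is the Markov product
   pi^j p^j_W.  Fix a type j.  Given the pre-treatment path, transition
   independence says that the untreated outcome at t > T0 has the same law in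
   both arms, and common support makes both arms of every path charged.  For the
   untreated arm the post-treatment part of p^j_W depends on the pre-treatment
   path only through X_T0, so averaging over paths with a given X_T0 turns the
   counterfactual mean E[X_t(0) | D = 1, Z = j] into the untreated means
   weighted by Pr(X_T0 | D = 1, Z = j); this is the representation.

   The representation is a functional of the joint pmf pi^j p^j_W, so uniqueness
   amounts to identifying that joint pmf from the mixture p_W.  With pasts a_i,
   states x2, x3 at periods k+1, k+2 and futures b_l, the matrix of mixture
   probabilities factors as Ubar(x2) D(x3, x2) L(x3)^T.  For a second parameter
   the transfer matrix Ubar'(x2)^-1 Ubar(x2) intertwines D(x3, x2) with D'(x3, x2);
   comparing two values of x2 and of x3, a nonzero entry (i, j) forces the
   eigenvalue ratio of ID(k)(a)(ii) of type j to equal that of type i for the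
   second parameter, so distinctness makes the transfer matrix monomial, i.e. a
   relabelling of types.  The relabelling matches L, then the untreated joint pmf
   on all paths; marginalisation and conditions (c), (d) extend it to the
   treated arm, and pi^1 < ... < pi^J forces it to be the identity. *)

Set Implicit Arguments.
Unset Strict Implicit.

Lemma frac_bounds_gt0 (F : realFieldType) (e a b : F) :
  0 < e -> 0 <= a -> 0 <= b -> e <= a / (a + b) <= 1 - e -> 0 < a /\ 0 < b.
Proof.
move=> e0 a0 b0 /andP [lo hi].
have ab0 : a + b != 0 by apply: contraTneq lo => ->; rewrite invr0 mulr0 -ltNge.
have {}ab0 : 0 < a + b by rewrite lt_def ab0 addr_ge0.
have ea : e * (a + b) <= a by rewrite -ler_pdivlMr.
have eb : e * (a + b) <= b by move: hi; rewrite -(ler_pM2r ab0) mulfVK ?gt_eqF //; lra.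
by split; nra.
Qed.

Lemma ratio_transfer (F : fieldType) (x z w w' d1 d2 d3 d4 e1 e2 e3 e4 : F) :
  x != 0 -> d2 != 0 -> d3 != 0 -> e2 != 0 -> e3 != 0 ->
  x * d1 = e1 * w -> z * d2 = e2 * w -> x * d3 = e3 * w' -> z * d4 = e4 * w' ->
  d1 / d3 * d4 / d2 = e1 / e3 * e4 / e2.
Proof.
move=> x0 d20 d30 e20 e30 h1 h2 h3 h4.
have A : x * d1 * e2 = e1 * (z * d2) by rewrite h2 h1; ring.
have B : x * d3 * e4 = e3 * (z * d4) by rewrite h4 h3; ring.
have C : x * (d1 * d4 * e2 * e3) = x * (d3 * d2 * e1 * e4).
  transitivity (x * d1 * e2 * (d4 * e3)); first by ring.
  by rewrite A; transitivity (x * d3 * e4 * (d2 * e1)); [rewrite B|]; ring.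
have {}C := mulfI x0 C.
have -> : d1 / d3 * d4 / d2 = (d1 * d4 * e2 * e3) / (d3 * d2 * e2 * e3).
  by field; rewrite d20 d30 e20 e30.
by rewrite C; field; rewrite d20 d30 e20 e30.
Qed.
Section UnitMatrix.
Variables (F : fieldType) (n : nat).
Implicit Types (A : 'M[F]_n).

Lemma unitmx_row_neq0 A i : A \in unitmx -> exists j, A i j != 0.
Proof.
move=> U; case: (pickP (fun j => A i j != 0)) => [j hj|H]; first by exists j.
have := mulmxV U; move/matrixP/(_ i i); rewrite !mxE eqxx /= big1 => [|j _].
  by move/eqP; rewrite eq_sym oner_eq0.
by move/negbFE/eqP: (H j) => ->; rewrite mul0r.
Qed.

Lemma unitmx_col_neq0 A j : A \in unitmx -> exists i, A i j != 0.
Proof. by rewrite -unitmx_tr => /(unitmx_row_neq0 j) [i]; rewrite mxE; exists i. Qed.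

Lemma unitmx_col_neq A j1 j2 : A \in unitmx -> j1 != j2 -> exists i, A i j1 != A i j2.
Proof.
move=> U ne; case: (pickP (fun i => A i j1 != A i j2)) => [i hi|H]; first by exists i.
move: U; rewrite unitmxE -det_tr (determinant_alternate (A := A^T) ne) ?unitr0 //.
by move=> i; rewrite !mxE; apply/eqP; apply/negbFE: (H i).
Qed.

Lemma unitmx_lin_inj A (f g : 'I_n -> F) : A \in unitmx ->
  (forall i, \sum_j A i j * f j = \sum_j A i j * g j) -> f =1 g.
Proof.
move=> U H j; apply/eqP; rewrite -subr_eq0; apply/eqP.
have e : A *m \col_j (f j - g j) = 0.
  apply/matrixP => i l; rewrite !mxE.
  under eq_bigr do rewrite mxE mulrBr.
  by rewrite sumrB H subrr.
by have := congr1 (mulmx (invmx A)) e; rewrite mulKmx // mulmx0 => /matrixP/(_ j 0); rewrite !mxE.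
Qed.

Lemma unitmx_diag (d : 'rV[F]_n) : (diag_mx d \in unitmx) = [forall i, d 0 i != 0].
Proof.
rewrite unitmxE det_diag unitfE.
by apply/prodf_neq0/forallP => H i //; exact: H.
Qed.

Lemma invmx_diag (d : 'rV[F]_n) : (forall i, d 0 i != 0) ->
  invmx (diag_mx d) = diag_mx (\row_i (d 0 i)^-1).
Proof.
move=> H; have U : diag_mx d \in unitmx by rewrite unitmx_diag; apply/forallP.
have E : diag_mx d *m diag_mx (\row_i (d 0 i)^-1) = 1%:M.
  rewrite mulmx_diag; apply/matrixP => i j; rewrite !mxE.
  by case: eqP => [->|]; rewrite ?mulr0n ?mulr1n // divff.
by rewrite -[LHS]mulmx1 -E mulKmx.
Qed.

Lemma mul_mx_diag_tr_entry A (d : 'rV[F]_n) (B : 'M[F]_n) i l :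
  (A *m diag_mx d *m B^T) i l = \sum_j A i j * d 0 j * B l j.
Proof. by rewrite mul_mx_diag !mxE; apply: eq_bigr => j _; rewrite !mxE. Qed.

Lemma mul_diag_tr_entry (d : 'rV[F]_n) (B : 'M[F]_n) i l : (diag_mx d *m B^T) i l = d 0 i * B l i.
Proof. by rewrite mul_diag_mx !mxE. Qed.

End UnitMatrix.

Lemma homo_ord_leq (n : nat) (f : 'I_n -> 'I_n) :
  {homo f : i j / (i < j)%N} -> forall i : 'I_n, (i <= f i)%N.
Proof.
move=> inc [m hm] /=; elim: m hm => [|m IH] hm //.
have hm' : (m < n)%N by lia.
have := inc (Ordinal hm') (Ordinal hm) (ltnSn m); have := IH hm'; lia.
Qed.

Lemma homo_ord_id (n : nat) (f : 'I_n -> 'I_n) : {homo f : i j / (i < j)%N} -> f =1 id.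
Proof.
move=> inc i; apply: val_inj; apply/eqP; rewrite eqn_leq (homo_ord_leq inc i) andbT.
pose g i := rev_ord (f (rev_ord i)).
have ginc : {homo g : i j / (i < j)%N}.
  move=> i1 i2 lt; have lt' : (rev_ord i2 < rev_ord i1)%N by rewrite /=; have := ltn_ord i2; lia.
  by have := inc _ _ lt'; rewrite /g /=; have := ltn_ord (f (rev_ord i1)); lia.
have := homo_ord_leq ginc (rev_ord i); rewrite /g rev_ordK /=.
by have := ltn_ord (f i); have := ltn_ord i; lia.
Qed.

Section FiniteProbability.
Variables (R : realFieldType) (K J : nat) (M : model R K J).
Hypothesis Hprob : prob_ok M.
Implicit Types A B : pred (Om M).

Lemma eq_Pr A B : A =1 B -> Pr M A = Pr M B.
Proof. by move=> e; apply: eq_bigl. Qed.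

Lemma Pr_ge0 A : 0 <= Pr M A.
Proof. by apply: sumr_ge0 => w _; case: Hprob. Qed.

Lemma le_Pr A B : (forall w, A w -> B w) -> Pr M A <= Pr M B.
Proof.
move=> AB; rewrite /Pr [X in _ <= X](bigID A) /= -[X in X <= _]addr0.
have -> : \sum_(w | B w && A w) Pm M w = \sum_(w | A w) Pm M w.
  by apply: eq_bigl => w; case: (boolP (A w)) => a; rewrite ?a ?(AB _ a) ?andbF.
by apply: lerD => //; apply: sumr_ge0 => w _; case: Hprob.
Qed.

Lemma PrID A B : Pr M A = Pr M (fun w => A w && B w) + Pr M (fun w => A w && ~~ B w).
Proof. by rewrite /Pr (bigID B) /=; congr (_ + _); apply: eq_bigl => w; rewrite andbC. Qed.

Lemma Pr_cond_transfer A B C : cPr M A B = cPr M A C ->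
  Pr M (fun w => A w && C w) = Pr M C / Pr M B * Pr M (fun w => A w && B w).
Proof.
rewrite /cPr => e; have [C0|C0] := eqVneq (Pr M C) 0.
  rewrite C0 !mul0r; apply: le_anti; rewrite Pr_ge0 andbT -C0.
  by apply: le_Pr => w /andP [].
by rewrite mulrAC -mulrA e mulrCA divff // mulr1.
Qed.

Lemma Pr_eq0_sum (V : lmodType R) A (f : Om M -> V) :
  Pr M A = 0 -> \sum_(w | A w) Pm M w *: f w = 0.
Proof.
move=> h0; apply: big1 => w Aw.
have -> : Pm M w = 0 by apply: (psumr_eq0P _ h0) => // w' _; case: Hprob.
by rewrite scale0r.
Qed.

End FiniteProbability.

(** * Path probabilities *)

Section PathLaw.
Variables (R : realFieldType) (K J T0 T : nat).
Implicit Types (psi : param R K J) (j : 'I_J) (h : nat -> 'I_K) (d : bool).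

Definition arm_trans psi j d s (x y : 'I_K) : R :=
  if d && (T0 < s)%N then q1_ psi j s x y else q0_ psi j s x y.

Definition path_pmf psi j n h d :=
  p1_ psi j (h 1%N) d * \prod_(2 <= s < n.+1) arm_trans psi j d s (h s) (h s.-1).

Definition joint_pmf psi j n h d := pi_ psi j * path_pmf psi j n h d.

Definition mixture_pmf psi n h d := \sum_j joint_pmf psi j n h d.

Definition set_at h n (x : 'I_K) : nat -> 'I_K := fun m => if m == n then x else h m.

Lemma pWj_path_pmf psi j h d : (1 <= T0)%N -> (T0 < T)%N ->
  pWj T0 T psi j h d = path_pmf psi j T h d.
Proof.
move=> hT0 hT; rewrite /pWj /path_pmf; case: d; last first.
  by congr (_ * _); apply: eq_big_nat => s _; rewrite /arm_trans.
rewrite -mulrA; congr (_ * _); rewrite [RHS](@big_cat_nat _ _ _ T0.+1) /=; [|lia|lia].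
congr (_ * _); apply: eq_big_nat => s /andP [hs1 hs].
  by rewrite /arm_trans /=; have -> : (T0 < s)%N = false by lia.
by rewrite /arm_trans /=; have -> : (T0 < s)%N by lia.
Qed.

Lemma pW_mixture_pmf psi h d : (1 <= T0)%N -> (T0 < T)%N ->
  pW T0 T psi h d = mixture_pmf psi T h d.
Proof.
by move=> hT0 hT; apply: eq_bigr => j _; rewrite pWj_path_pmf.
Qed.

Lemma eq_path_pmf psi j n h h' d : (1 <= n)%N ->
  (forall m, (1 <= m <= n)%N -> h m = h' m) -> path_pmf psi j n h d = path_pmf psi j n h' d.
Proof.
move=> hn e; rewrite /path_pmf e ?hn //; congr (_ * _); apply: eq_big_nat => s hs.
by rewrite !e //; case: s hs => [|[|s]] //=; lia.
Qed.

Lemma eq_joint_pmf psi j n h h' d : (1 <= n)%N ->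
  (forall m, (1 <= m <= n)%N -> h m = h' m) -> joint_pmf psi j n h d = joint_pmf psi j n h' d.
Proof. by move=> hn e; rewrite /joint_pmf (eq_path_pmf _ _ _ hn e). Qed.

Lemma path_pmfS psi j n h d : (1 <= n)%N ->
  path_pmf psi j n.+1 h d = path_pmf psi j n h d * arm_trans psi j d n.+1 (h n.+1) (h n).
Proof. by move=> hn; rewrite /path_pmf big_nat_recr //= mulrA. Qed.

Lemma joint_pmfS psi j n h d : (1 <= n)%N ->
  joint_pmf psi j n.+1 h d = joint_pmf psi j n h d * arm_trans psi j d n.+1 (h n.+1) (h n).
Proof. by move=> hn; rewrite /joint_pmf path_pmfS // mulrA. Qed.

Lemma joint_pmf_cat psi j m n h d : (1 <= m <= n)%N ->
  joint_pmf psi j n h d =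
  joint_pmf psi j m h d * \prod_(m.+1 <= s < n.+1) arm_trans psi j d s (h s) (h s.-1).
Proof.
move=> hmn; rewrite /joint_pmf /path_pmf -!mulrA; congr (_ * (_ * _)).
by apply: big_cat_nat; lia.
Qed.

Lemma sum_joint_pmfS eps psi j n h d : in_Theta T0 T eps psi -> (1 <= n < T)%N ->
  \sum_x joint_pmf psi j n.+1 (set_at h n.+1 x) d = joint_pmf psi j n h d.
Proof.
case=> _ _ _ Hq0 Hq1 hn.
have trans1 : \sum_x arm_trans psi j d n.+1 x (h n) = 1.
  rewrite /arm_trans; case: (boolP (d && (T0 < n.+1)%N)) => [/andP [_ lt]|_].
    by case: (Hq1 j n.+1 (ltac:(lia)) (h n)).
  by case: (Hq0 j n.+1 (ltac:(lia)) (h n)).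
rewrite -[RHS]mulr1 -trans1 mulr_sumr; apply: eq_bigr => x _.
rewrite joint_pmfS; last by lia.
rewrite /set_at eqxx; have -> : (n == n.+1) = false by lia.
congr (_ * _); apply: eq_joint_pmf; first by lia.
by move=> m hm; have -> : (m == n.+1) = false by lia.
Qed.

Lemma sum_mixture_pmfS eps psi n h d : in_Theta T0 T eps psi -> (1 <= n < T)%N ->
  \sum_x mixture_pmf psi n.+1 (set_at h n.+1 x) d = mixture_pmf psi n h d.
Proof.
move=> Ht hn; rewrite /mixture_pmf exchange_big /=.
by apply: eq_bigr => j _; apply: sum_joint_pmfS Ht hn.
Qed.

Lemma sum_joint_pmf1 eps psi j : in_Theta T0 T eps psi ->
  \sum_x \sum_d joint_pmf psi j 1 (fun _ => x) d = pi_ psi j.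
Proof.
case=> _ _ Hp _ _; have [_ Hs] := Hp j.
rewrite -[RHS]mulr1 -Hs mulr_sumr; apply: eq_bigr => x _.
rewrite mulr_sumr; apply: eq_bigr => d _.
by rewrite /joint_pmf /path_pmf big_geq // mulr1.
Qed.

Definition splice (K n : nat) (a b : nat -> 'I_K) : nat -> 'I_K :=
  fun m => if (m <= n)%N then a m else b m.

End PathLaw.

Lemma eq_consistent_pmf (K T : nat) (R : nmodType) (f g : nat -> (nat -> 'I_K) -> R) :
  (forall n h, (1 <= n < T)%N -> \sum_x f n.+1 (set_at h n.+1 x) = f n h) ->
  (forall n h, (1 <= n < T)%N -> \sum_x g n.+1 (set_at h n.+1 x) = g n h) ->
  (forall h, f T h = g T h) ->
  forall n h, (1 <= n <= T)%N -> f n h = g n h.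
Proof.
move=> hf hg hT n h hn; have -> : n = (T - (T - n))%N by lia.
have : (T - n < T)%N by lia.
elim: (T - n)%N h => [|m IH] h hm; first by rewrite subn0.
rewrite -hf; last by lia.
rewrite -hg; last by lia.
have -> : (T - m.+1).+1 = (T - m)%N by lia.
by apply: eq_bigr => x _; apply: IH; lia.
Qed.

Section PathEncoding.
Variables (R : realFieldType) (K J T0 T : nat) (x0 : 'I_K).
Hypotheses (hT0 : (1 <= T0)%N) (hT : (T0 < T)%N).

Definition ffun_at m (g : {ffun 'I_m -> 'I_K}) (i : nat) : 'I_K :=
  if insub i is Some o then g o else x0.

Lemma ffun_at_ord m (g : {ffun 'I_m -> 'I_K}) (o : 'I_m) : ffun_at g o = g o.
Proof. by rewrite /ffun_at valK. Qed.

Lemma ffun_at_lt m (g : {ffun 'I_m -> 'I_K}) i (hi : (i < m)%N) : ffun_at g i = g (Ordinal hi).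
Proof. by rewrite -ffun_at_ord. Qed.

Definition prepath := {ffun 'I_T0 -> 'I_K}.
Definition postpath := {ffun 'I_(T - T0) -> 'I_K}.
Definition path := (prepath * postpath)%type.

Definition pre_seq (g1 : prepath) : nat -> 'I_K := fun n => ffun_at g1 n.-1.
Definition path_seq (g : path) : nat -> 'I_K :=
  fun n => if (n <= T0)%N then ffun_at g.1 n.-1 else ffun_at g.2 (n - T0.+1).
Definition post_seq (x : 'I_K) (g2 : postpath) : nat -> 'I_K :=
  fun n => if (n <= T0)%N then x else ffun_at g2 (n - T0.+1).
Definition last_pre (g1 : prepath) := ffun_at g1 T0.-1.

Lemma last_pre_cst x : last_pre [ffun=> x] = x.
Proof.
have hi : (T0.-1 < T0)%N by rewrite ltn_predL.
by rewrite /last_pre (ffun_at_lt _ hi) ffunE.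
Qed.

Variable M : model R K J.

Definition pre_path w : prepath := [ffun i : 'I_T0 => Xobs T0 M i.+1 w].
Definition post_path w : postpath := [ffun i : 'I_(T - T0) => Xobs T0 M (T0.+1 + i) w].

Lemma Xobs_pre_path n w : (1 <= n <= T0)%N -> Xobs T0 M n w = pre_seq (pre_path w) n.
Proof.
move=> hn; have hi : (n.-1 < T0)%N by lia.
by rewrite /pre_seq (ffun_at_lt _ hi) ffunE /=; congr Xobs; lia.
Qed.

Lemma Xobs_post_path n w : (T0 < n <= T)%N -> Xobs T0 M n w = ffun_at (post_path w) (n - T0.+1).
Proof.
move=> hn; have hi : (n - T0.+1 < T - T0)%N by lia.
by rewrite (ffun_at_lt _ hi) ffunE /=; congr Xobs; lia.
Qed.

Lemma Xobs_T0 w : Xobs T0 M T0 w = last_pre (pre_path w).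
Proof. by rewrite Xobs_pre_path //; lia. Qed.

Lemma hist_path_seq g w : hist (Xobs T0 M) T (path_seq g) w = ((pre_path w, post_path w) == g).
Proof.
case: g => g1 g2; apply/forallP/eqP => [H|[<- <-] i].
  congr pair; apply/ffunP => i.
    have hi : (i < T)%N by have := ltn_ord i; lia.
    move/eqP: (H (Ordinal hi)); rewrite /path_seq /= ifT; last by have := ltn_ord i; lia.
    by rewrite ffunE => ->; rewrite ffun_at_ord.
  have hi : (T0 + i < T)%N by have := ltn_ord i; lia.
  move/eqP: (H (Ordinal hi)); rewrite /path_seq /= ifF; last by lia.
  rewrite ffunE => ->; have -> : ((T0 + i).+1 - T0.+1 = i)%N by lia.
  by rewrite ffun_at_ord.
apply/eqP; rewrite /path_seq /=; case: ifP => hi.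
  by rewrite Xobs_pre_path //; lia.
by rewrite Xobs_post_path //; have := ltn_ord i; lia.
Qed.

Lemma hist_pre_seq g1 w : hist (Xobs T0 M) T0 (pre_seq g1) w = (pre_path w == g1).
Proof.
apply/forallP/eqP => [H|<- i].
  by apply/ffunP => i; move/eqP: (H i); rewrite ffunE => ->; rewrite /pre_seq ffun_at_ord.
by apply/eqP; rewrite /pre_seq ffun_at_ord ffunE.
Qed.

Lemma sum_path_law (V : lmodType R) (phi : 'I_J -> path -> bool -> V) (psi : param R K J) :
  generated_by T0 T M psi ->
  \sum_w Pm M w *: phi (Zm M w) (pre_path w, post_path w) (Dm M w) =
  \sum_j \sum_(g : path) \sum_d joint_pmf T0 psi j T (path_seq g) d *: phi j g d.
Proof.
move=> Hg.
rewrite (partition_big (fun w => (Zm M w, ((pre_path w, post_path w), Dm M w))) predT) //=.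
under [RHS]eq_bigr do rewrite pair_big /=.
rewrite pair_big /=; apply: eq_bigr => -[j [g d]] _ /=.
rewrite /joint_pmf -pWj_path_pmf // -Hg /Pr scaler_suml; apply: eq_big => w.
  by rewrite hist_path_seq -!xpair_eqE.
by move/eqP => [-> -> ->].
Qed.

End PathEncoding.

(** * Representation of the LTATT *)

Definition ltatt_rhs (R : realFieldType) (K J T0 : nat) (M : model R K J) (t : nat)
    (j : 'I_J) : 'rV[R]_K :=
  \sum_(x : 'I_K)
     cPr M (fun w => Xobs T0 M T0 w == x) (fun w => Dm M w && (Zm M w == j)) *:
     (cE M (fun w => onehot (Xobs T0 M t w))
           (fun w => [&& Xobs T0 M T0 w == x, Dm M w & Zm M w == j])
    - cE M (fun w => onehot (Xobs T0 M t w))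
           (fun w => [&& Xobs T0 M T0 w == x, ~~ Dm M w & Zm M w == j])).

Section Representation.
Variables (R : realFieldType) (K J T0 T : nat) (x0 : 'I_K).
Hypotheses (hT0 : (1 <= T0)%N) (hT : (T0 < T)%N).
Variables (M : model R K J) (psi : param R K J) (j : 'I_J).
Hypotheses (Hprob : prob_ok M) (Hg : generated_by T0 T M psi).

Definition arm_ev d : pred (Om M) := fun w => (Dm M w == d) && (Zm M w == j).
Definition slice_ev d (P : pred (prepath K T0)) : pred (Om M) :=
  fun w => P (pre_path T0 w) && arm_ev d w.
Definition hist_ev d g1 := slice_ev d (pred1 g1).
Definition last_ev d x := slice_ev d (fun g1 => last_pre x0 g1 == x).

Lemma sum_slice (V : lmodType R) (P : pred (prepath K T0)) (f : postpath K T0 T -> V) d :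
  \sum_(w | slice_ev d P w) Pm M w *: f (post_path T0 T w) =
  \sum_(g1 | P g1) \sum_g2 joint_pmf T0 psi j T (path_seq x0 (g1, g2)) d *: f g2.
Proof.
pose phi j' (g : path K T0 T) d' := if P g.1 && ((d' == d) && (j' == j)) then f g.2 else 0.
transitivity (\sum_w Pm M w *: phi (Zm M w) (pre_path T0 w, post_path T0 T w) (Dm M w)).
  rewrite big_mkcond /=; apply: eq_bigr => w _; rewrite /phi /slice_ev /arm_ev /=.
  by case: ifP => _ //; rewrite scaler0.
rewrite (sum_path_law x0 hT0 hT phi Hg) (bigD1 j) //= [X in _ + X]big1 ?addr0; last first.
  move=> j' /negbTE nj; apply: big1 => g _; apply: big1 => d' _.
  by rewrite /phi nj !andbF scaler0.
rewrite [RHS]big_mkcond /= [RHS](eq_bigr (fun g1 => \sum_g2 \sum_d'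
    joint_pmf T0 psi j T (path_seq x0 (g1, g2)) d' *: phi j (g1, g2) d')); last first.
  move=> g1 _; rewrite /phi /=; case: (P g1).
    apply: eq_bigr => g2 _; rewrite big_bool /phi eqxx; clear phi.
    by case: d; rewrite /= scaler0 ?addr0 ?add0r.
  by rewrite big1 // => g2 _; rewrite big1 // => d' _; rewrite scaler0.
by rewrite [RHS]pair_bigA; apply: eq_bigr => -[g1 g2].
Qed.

Lemma Pr_slice (P : pred (prepath K T0)) d :
  Pr M (slice_ev d P) =
  \sum_(g1 | P g1) \sum_(g2 : postpath K T0 T) joint_pmf T0 psi j T (path_seq x0 (g1, g2)) d.
Proof.
have := sum_slice (V := R^o) P (fun _ => 1) d.
under eq_bigr do rewrite [_ *: _]mulr1.
by under [RHS]eq_bigr do under eq_bigr do rewrite [_ *: _]mulr1.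
Qed.

Definition post_weight x (g2 : postpath K T0 T) :=
  \prod_(T0.+1 <= s < T.+1) q0_ psi j s (post_seq x0 x g2 s) (post_seq x0 x g2 s.-1).

Lemma joint_pmf_path_seq (g : path K T0 T) d :
  joint_pmf T0 psi j T (path_seq x0 g) d = joint_pmf T0 psi j T0 (pre_seq x0 g.1) d *
    \prod_(T0.+1 <= s < T.+1) arm_trans T0 psi j d s (path_seq x0 g s) (path_seq x0 g s.-1).
Proof.
rewrite (joint_pmf_cat _ _ _ _ (m := T0)); last by lia.
by congr (_ * _); apply: eq_joint_pmf => // m hm; rewrite /path_seq /pre_seq ifT //; lia.
Qed.

Lemma joint_pmf_untreated g1 g2 :
  joint_pmf T0 psi j T (path_seq x0 (g1, g2)) false =
  joint_pmf T0 psi j T0 (pre_seq x0 g1) false * post_weight (last_pre x0 g1) g2.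
Proof.
rewrite joint_pmf_path_seq; congr (_ * _); apply: eq_big_nat => s hs.
rewrite /arm_trans /= /path_seq /post_seq /=; have -> : (s <= T0)%N = false by lia.
by case: (boolP (s.-1 <= T0)%N) => // c; rewrite /last_pre; do 2 f_equal; lia.
Qed.

Hypothesis Hcs : common_support T0 M.

Lemma Pr_hist_ev_gt0 d g1 : 0 < Pr M (hist_ev d g1).
Proof.
have [e [e0 /(_ (pre_seq x0 g1) j) He]] := Hcs.
pose H w := hist (Xobs T0 M) T0 (pre_seq x0 g1) w && (Zm M w == j).
have evE d' w : (H w && (Dm M w == d')) = hist_ev d' g1 w.
  rewrite /H hist_pre_seq /hist_ev /slice_ev /arm_ev /=.
  by case: (Dm M w); case: d'; rewrite ?andbF ?andbT.
have eA : Pr M (fun w => Dm M w && H w) = Pr M (hist_ev true g1).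
  by apply: eq_Pr => w; rewrite -evE andbC eqb_id.
have eB : Pr M H = Pr M (hist_ev true g1) + Pr M (hist_ev false g1).
  rewrite (PrID _ (fun w => Dm M w)).
  by congr (_ + _); apply: eq_Pr => w; rewrite -evE ?eqb_id ?eqbF_neg.
rewrite /cPr -/H eA eB in He.
have [] := frac_bounds_gt0 e0 (Pr_ge0 Hprob _) (Pr_ge0 Hprob _) He.
by case: d.
Qed.

Lemma joint_pmf_T0_neq0 h d : joint_pmf T0 psi j T0 h d != 0.
Proof.
have := Pr_hist_ev_gt0 d [ffun i : 'I_T0 => h i.+1].
rewrite /hist_ev Pr_slice big_pred1_eq.
under eq_bigr do rewrite joint_pmf_path_seq /=.
rewrite -mulr_sumr => /lt0r_neq0; rewrite mulf_eq0 negb_or => /andP [+ _].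
congr (_ != _); apply: eq_joint_pmf => // m hm.
have hi : (m.-1 < T0)%N by lia.
by rewrite /pre_seq (ffun_at_lt x0 _ hi) ffunE /=; congr h; lia.
Qed.

Variable t : nat.
Hypothesis ht : (T0 < t <= T)%N.

Definition post_mass x := \sum_g2 post_weight x g2.
Definition post_mean x : 'rV[R]_K :=
  \sum_g2 post_weight x g2 *: onehot (ffun_at x0 g2 (t - T0.+1)).
Definition pre_weight (g1 : prepath K T0) := joint_pmf T0 psi j T0 (pre_seq x0 g1) false.

Definition Xsum d (E : pred (Om M)) : 'rV[R]_K :=
  \sum_(w | E w) Pm M w *: onehot (Xpot M d t w).

Lemma Xobs_arm w : Xobs T0 M t w = Xpot M (Dm M w) t w.
Proof. by rewrite /Xobs ifF; [case: (Dm M w) | lia]. Qed.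

Lemma Pr_untreated_slice (P : pred (prepath K T0)) :
  Pr M (slice_ev false P) =
  \sum_(g1 | P g1) pre_weight g1 * post_mass (last_pre x0 g1).
Proof.
rewrite Pr_slice; apply: eq_bigr => g1 _; rewrite /post_mass mulr_sumr.
by apply: eq_bigr => g2 _; rewrite joint_pmf_untreated.
Qed.

Lemma Xsum_untreated_slice (P : pred (prepath K T0)) :
  Xsum false (slice_ev false P) =
  \sum_(g1 | P g1) pre_weight g1 *: post_mean (last_pre x0 g1).
Proof.
rewrite /Xsum (eq_bigr (fun w => Pm M w *: onehot (ffun_at x0 (post_path T0 T w) (t - T0.+1)))).
  rewrite /= (sum_slice _ (fun g2 => onehot (ffun_at x0 g2 (t - T0.+1)))).
  apply: eq_bigr => g1 _; rewrite /post_mean scaler_sumr.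
  by apply: eq_bigr => g2 _; rewrite joint_pmf_untreated scalerA.
move=> w /andP [_ /andP [/eqP hD _]] /=.
by rewrite -Xobs_post_path // Xobs_arm hD.
Qed.

Lemma untreated_slice_mean (P : pred (prepath K T0)) x :
  (forall g1, P g1 -> last_pre x0 g1 = x) -> 0 < Pr M (slice_ev false P) ->
  (Pr M (slice_ev false P))^-1 *: Xsum false (slice_ev false P) = (post_mass x)^-1 *: post_mean x.
Proof.
move=> Px; rewrite Pr_untreated_slice Xsum_untreated_slice.
rewrite (eq_bigr (fun g1 => pre_weight g1 * post_mass x)); last by move=> g1 /Px ->.
rewrite [X in _ *: X](eq_bigr (fun g1 => pre_weight g1 *: post_mean x)); last by move=> g1 /Px ->.
rewrite -mulr_suml -scaler_suml => /lt0r_neq0; rewrite mulf_eq0 negb_or => /andP [a0 s0].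
by rewrite scalerA invfM mulrAC mulVf ?mul1r.
Qed.

Lemma sum_slice_partition (V : nmodType) d P (F : Om M -> V) :
  \sum_(w | slice_ev d P w) F w = \sum_(g1 | P g1) \sum_(w | hist_ev d g1 w) F w.
Proof.
rewrite (partition_big (fun w => pre_path T0 w) P) => [|w /andP []] //.
apply: eq_bigr => g1 Pg1; apply: eq_bigl => w; rewrite /hist_ev /slice_ev /=.
by case: eqP => [->|]; rewrite ?Pg1 ?andbF ?andbT.
Qed.

Lemma Xsum_arm_partition d' d : Xsum d' (arm_ev d) = \sum_x Xsum d' (last_ev d x).
Proof.
rewrite /Xsum (partition_big (fun w => last_pre x0 (pre_path T0 w)) predT) //.
by apply: eq_bigr => x _; apply: eq_bigl => w; rewrite /last_ev /slice_ev andbC.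
Qed.

Lemma Xsum_by_state d E :
  Xsum d E = \sum_y Pr M (fun w => E w && (Xpot M d t w == y)) *: onehot y.
Proof.
rewrite /Xsum (partition_big (Xpot M d t) predT) //=; apply: eq_bigr => y _.
by rewrite /Pr scaler_suml; apply: eq_bigr => w /andP [_ /eqP ->].
Qed.

Hypothesis Htr : trans_indep T0 T M.

Lemma Xsum_hist_counterfactual g1 :
  Xsum false (hist_ev true g1) =
  (Pr M (hist_ev true g1) / Pr M (hist_ev false g1)) *: Xsum false (hist_ev false g1).
Proof.
rewrite !Xsum_by_state scaler_sumr; apply: eq_bigr => y _; rewrite scalerA; congr (_ *: _).
have eT : hist_ev true g1 =1
    (fun w => [&& hist (Xobs T0 M) T0 (pre_seq x0 g1) w, Dm M w & Zm M w == j]).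
  by move=> w; rewrite hist_pre_seq /hist_ev /slice_ev /arm_ev /= eqb_id.
have eF : hist_ev false g1 =1
    (fun w => [&& hist (Xobs T0 M) T0 (pre_seq x0 g1) w, ~~ Dm M w & Zm M w == j]).
  by move=> w; rewrite hist_pre_seq /hist_ev /slice_ev /arm_ev /= eqbF_neg.
have ey E E' : E =1 E' ->
    (fun w => E w && (Xpot M false t w == y)) =1 (fun w => (X0m M t w == y) && E' w).
  by move=> e w; rewrite e andbC.
rewrite (eq_Pr eT) (eq_Pr eF) (eq_Pr (ey _ _ eT)) (eq_Pr (ey _ _ eF)).
exact (Pr_cond_transfer Hprob (Htr ht y (pre_seq x0 g1) j)).
Qed.

Lemma Xsum_last_counterfactual x :
  Xsum false (last_ev true x) =
  Pr M (last_ev true x) *: ((Pr M (last_ev false x))^-1 *: Xsum false (last_ev false x)).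
Proof.
have last_pos : 0 < Pr M (last_ev false x).
  apply: (lt_le_trans (Pr_hist_ev_gt0 false [ffun=> x])); apply: le_Pr => // w.
  by case/andP=> /eqP hpre ev; rewrite /last_ev /slice_ev hpre (last_pre_cst x0 hT0) eqxx.
rewrite (untreated_slice_mean (x := x) _ last_pos); last by move=> g1 /eqP.
rewrite /Xsum /Pr !sum_slice_partition scaler_suml; apply: eq_bigr => g1 /eqP lx.
rewrite -/(Xsum false _) Xsum_hist_counterfactual -/(Pr M _) -scalerA.
rewrite (untreated_slice_mean (x := x) _ (Pr_hist_ev_gt0 false g1)) //.
by move=> g /eqP ->.
Qed.

Lemma LTATT_Xsum : LTATT M t j =
  (Pr M (arm_ev true))^-1 *: (Xsum true (arm_ev true) - Xsum false (arm_ev true)).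
Proof.
rewrite /LTATT /cE /Xsum -sumrB.
have eB : (fun w => Dm M w && (Zm M w == j)) =1 arm_ev true.
  by move=> w; rewrite /arm_ev eqb_id.
by rewrite (eq_Pr eB); congr (_ *: _); apply: eq_big => // w _; rewrite scalerBr.
Qed.

Lemma ltatt_rhs_term x :
  cPr M (fun w => Xobs T0 M T0 w == x) (fun w => Dm M w && (Zm M w == j)) *:
    (cE M (fun w => onehot (Xobs T0 M t w))
          (fun w => [&& Xobs T0 M T0 w == x, Dm M w & Zm M w == j])
   - cE M (fun w => onehot (Xobs T0 M t w))
          (fun w => [&& Xobs T0 M T0 w == x, ~~ Dm M w & Zm M w == j])) =
  (Pr M (arm_ev true))^-1 *: (Xsum true (last_ev true x) -
    Pr M (last_ev true x) *: ((Pr M (last_ev false x))^-1 *: Xsum false (last_ev false x))).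
Proof.
have XT0 w : Xobs T0 M T0 w = last_pre x0 (pre_path T0 w) := Xobs_T0 x0 hT0 hT w.
have e1 : Pr M (fun w => [&& Xobs T0 M T0 w == x, Dm M w & Zm M w == j]) = Pr M (last_ev true x).
  by apply: eq_Pr => w; rewrite XT0 /last_ev /slice_ev /arm_ev eqb_id.
have e0 : Pr M (fun w => [&& Xobs T0 M T0 w == x, ~~ Dm M w & Zm M w == j]) =
    Pr M (last_ev false x).
  by apply: eq_Pr => w; rewrite XT0 /last_ev /slice_ev /arm_ev eqbF_neg.
have eB : Pr M (fun w => Dm M w && (Zm M w == j)) = Pr M (arm_ev true).
  by apply: eq_Pr => w; rewrite /arm_ev eqb_id.
have s1 : \sum_(w | [&& Xobs T0 M T0 w == x, Dm M w & Zm M w == j])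
    Pm M w *: onehot (Xobs T0 M t w) = Xsum true (last_ev true x).
  apply: eq_big => [w|w /and3P [_ hD _]]; first by rewrite XT0 /last_ev /slice_ev /arm_ev eqb_id.
  by rewrite Xobs_arm hD.
have s0 : \sum_(w | [&& Xobs T0 M T0 w == x, ~~ Dm M w & Zm M w == j])
    Pm M w *: onehot (Xobs T0 M t w) = Xsum false (last_ev false x).
  apply: eq_big => [w|w /and3P [_ /negbTE hD _]].
    by rewrite XT0 /last_ev /slice_ev /arm_ev eqbF_neg.
  by rewrite Xobs_arm hD.
rewrite /cPr /cE e1 e0 eB s1 s0.
have [p0|p0] := eqVneq (Pr M (last_ev true x)) 0.
  have -> : Xsum true (last_ev true x) = 0 by apply: Pr_eq0_sum.
  by rewrite p0 !(mul0r, scale0r, scaler0, subr0, sub0r, oppr0).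
rewrite !scalerBr !scalerA; congr (_ *: _ - _ *: _); last by ring.
by rewrite mulrAC divff // mul1r.
Qed.

Lemma LTATT_representation : LTATT M t j = ltatt_rhs T0 M t j.
Proof.
rewrite LTATT_Xsum /ltatt_rhs.
under [RHS]eq_bigr do rewrite ltatt_rhs_term.
rewrite -scaler_sumr sumrB !Xsum_arm_partition; congr (_ *: (_ - _)).
by apply: eq_bigr => x _; exact: Xsum_last_counterfactual.
Qed.

End Representation.

Section RepresentationLaw.
Variables (R : realFieldType) (K J T0 T : nat) (x0 : 'I_K).
Hypotheses (hT0 : (1 <= T0)%N) (hT : (T0 < T)%N).

Definition law_mean (V : lmodType R) (psi : param R K J) (phi : 'I_J -> path K T0 T -> bool -> V) :=
  \sum_j \sum_g \sum_d joint_pmf T0 psi j T (path_seq x0 g) d *: phi j g d.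

Definition law_Pr psi (F : 'I_J -> path K T0 T -> bool -> bool) : R :=
  law_mean (V := R^o) psi (fun j g d => (F j g d)%:R).

Definition law_sum psi t (F : 'I_J -> path K T0 T -> bool -> bool) : 'rV[R]_K :=
  law_mean psi (fun j g d => (F j g d)%:R *: onehot (ffun_at x0 g.2 (t - T0.+1))).

Section Events.
Variables (j : 'I_J) (x : 'I_K).
Definition treated_ev j' (g : path K T0 T) d := d && (j' == j).
Definition treated_last_ev j' (g : path K T0 T) d := (last_pre x0 g.1 == x) && (d && (j' == j)).
Definition untreated_last_ev j' (g : path K T0 T) d :=
  (last_pre x0 g.1 == x) && (~~ d && (j' == j)).
End Events.

Definition ltatt_rhs_law psi t j : 'rV[R]_K :=
  \sum_x (law_Pr psi (treated_last_ev j x) / law_Pr psi (treated_ev j)) *: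
     ((law_Pr psi (treated_last_ev j x))^-1 *: law_sum psi t (treated_last_ev j x)
      - (law_Pr psi (untreated_last_ev j x))^-1 *: law_sum psi t (untreated_last_ev j x)).

Lemma eq_ltatt_rhs_law psi psi' t j :
  (forall j h d, joint_pmf T0 psi j T h d = joint_pmf T0 psi' j T h d) ->
  ltatt_rhs_law psi t j = ltatt_rhs_law psi' t j.
Proof.
move=> E; have eL V phi : law_mean (V := V) psi phi = law_mean psi' phi.
  by apply: eq_bigr => j' _; apply: eq_bigr => g _; apply: eq_bigr => d _; rewrite E.
by apply: eq_bigr => x _; rewrite /law_Pr /law_sum !eL.
Qed.

Variables (M : model R K J) (psi : param R K J).
Hypothesis Hg : generated_by T0 T M psi.

Lemma Pr_law F :
  Pr M (fun w => F (Zm M w) (pre_path T0 w, post_path T0 T w) (Dm M w)) = law_Pr psi F.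
Proof.
rewrite /law_Pr /law_mean -(sum_path_law x0 hT0 hT _ Hg) /Pr big_mkcond /=.
by apply: eq_bigr => w _; case: F; rewrite /GRing.scale /= ?mulr1 ?mulr0.
Qed.

Lemma sum_law t F : (T0 < t <= T)%N ->
  \sum_(w | F (Zm M w) (pre_path T0 w, post_path T0 T w) (Dm M w))
    Pm M w *: onehot (Xobs T0 M t w) = law_sum psi t F.
Proof.
move=> ht; rewrite /law_sum /law_mean -(sum_path_law x0 hT0 hT _ Hg) big_mkcond /=.
apply: eq_bigr => w _; rewrite -(Xobs_post_path x0 hT0 hT) //.
by case: F; rewrite ?scale1r ?scale0r ?scaler0.
Qed.

Lemma ltatt_rhs_lawE t j : (T0 < t <= T)%N -> ltatt_rhs T0 M t j = ltatt_rhs_law psi t j.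
Proof.
move=> ht; apply: eq_bigr => x _; rewrite /cPr /cE.
have XT0 w : Xobs T0 M T0 w = last_pre x0 (pre_path T0 w) := Xobs_T0 x0 hT0 hT w.
have -> : Pr M (fun w => (Xobs T0 M T0 w == x) && (Dm M w && (Zm M w == j))) =
    law_Pr psi (treated_last_ev j x) by rewrite -Pr_law; apply: eq_Pr => w; rewrite XT0.
have -> : Pr M (fun w => [&& Xobs T0 M T0 w == x, ~~ Dm M w & Zm M w == j]) =
    law_Pr psi (untreated_last_ev j x) by rewrite -Pr_law; apply: eq_Pr => w; rewrite XT0.
have -> : Pr M (fun w => Dm M w && (Zm M w == j)) = law_Pr psi (treated_ev j) by rewrite -Pr_law.
have -> : \sum_(w | [&& Xobs T0 M T0 w == x, Dm M w & Zm M w == j])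
    Pm M w *: onehot (Xobs T0 M t w) = law_sum psi t (treated_last_ev j x).
  by rewrite -sum_law //; apply: eq_bigl => w; rewrite XT0.
have -> : \sum_(w | [&& Xobs T0 M T0 w == x, ~~ Dm M w & Zm M w == j])
    Pm M w *: onehot (Xobs T0 M t w) = law_sum psi t (untreated_last_ev j x).
  by rewrite -sum_law //; apply: eq_bigl => w; rewrite XT0.
by [].
Qed.

End RepresentationLaw.

(** * Identification of the joint law of (Z, W) *)

Section Identification.
Variables (R : realFieldType) (K J T0 T k : nat) (eps : R) (psi psi' : param R K J).
Hypotheses (hk : (1 <= k)%N) (hkT0 : (k.+1 <= T0)%N) (hkT : (2 * k.+1 <= T)%N).
Hypotheses (Ht : in_Theta T0 T eps psi) (Ht' : in_Theta T0 T eps psi').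
Hypothesis Hmix : forall h d, mixture_pmf T0 psi T h d = mixture_pmf T0 psi' T h d.

Implicit Types (p : param R K J) (h : nat -> 'I_K).

Lemma joint_pmf_k p j h d : joint_pmf T0 p j k h d = pi_ p j * P1 k p j h d.
Proof.
rewrite /joint_pmf /path_pmf /P1; congr (_ * (_ * _)); apply: eq_big_nat => s hs.
by rewrite /arm_trans; case: d => //=; rewrite ifF //; lia.
Qed.

Lemma joint_pmf_k1 p j h d :
  joint_pmf T0 p j k.+1 h d = joint_pmf T0 p j k h d * q21 k p j (h k.+1) h.
Proof. by rewrite joint_pmfS // /arm_trans /q21; case: d => //=; rewrite ifF //; lia. Qed.

Lemma joint_pmf_k2 p j h :
  joint_pmf T0 p j k.+2 h false = joint_pmf T0 p j k.+1 h false * q32 k p j (h k.+2) (h k.+1).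
Proof. by rewrite joint_pmfS. Qed.

Lemma joint_pmf_untreated_tail p j h :
  joint_pmf T0 p j T h false = joint_pmf T0 p j k.+2 h false * q43 T k p j h (h k.+2).
Proof.
rewrite (joint_pmf_cat _ _ _ _ (m := k.+2)); last by lia.
by congr (_ * _); apply: eq_big_nat => s hs; rewrite /arm_trans /=; case: eqP => // ->.
Qed.

Definition treated_tail p j h := \prod_(k.+2 <= s < T.+1) arm_trans T0 p j true s (h s) (h s.-1).

Lemma joint_pmf_treated_tail p j h :
  joint_pmf T0 p j T h true = joint_pmf T0 p j k.+1 h true * treated_tail p j h.
Proof. by rewrite (joint_pmf_cat _ _ _ _ (m := k.+1)) //; lia. Qed.

Lemma eq_P1 p j h h' d : (forall m, (1 <= m <= k)%N -> h m = h' m) -> P1 k p j h d = P1 k p j h' d.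
Proof.
move=> e; rewrite /P1 e ?hk //; congr (_ * _); apply: eq_big_nat => s hs.
by rewrite !e //; case: s hs => [|[|s]] //=; lia.
Qed.

Lemma eq_q43 p j h h' x : (forall m, (k.+3 <= m <= T)%N -> h m = h' m) ->
  q43 T k p j h x = q43 T k p j h' x.
Proof.
move=> e; apply: eq_big_nat => s hs; rewrite e //; case: eqP => // ne.
by rewrite e //; case: s hs ne => //= s; lia.
Qed.

Lemma eq_treated_tail p j h h' : (forall m, (k.+1 <= m <= T)%N -> h m = h' m) ->
  treated_tail p j h = treated_tail p j h'.
Proof. by move=> e; apply: eq_big_nat => s hs; rewrite !e //; case: s hs => //= s; lia. Qed.

Lemma eq_mixture_pmf n h d : (1 <= n <= T)%N ->
  mixture_pmf T0 psi n h d = mixture_pmf T0 psi' n h d.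
Proof.
move=> hn; apply: (eq_consistent_pmf (f := fun n h => mixture_pmf T0 psi n h d)
  (g := fun n h => mixture_pmf T0 psi' n h d)) => // [n' h' hn'|n' h' hn'].
- exact: sum_mixture_pmfS Ht hn'.
- exact: sum_mixture_pmfS Ht' hn'.
Qed.

Definition head_pmf p j h := joint_pmf T0 p j k.+2 h false.

(* [Lbar] without the normalising denominators of [tau]. *)
Definition joint_q21_mx p (e : 'I_J -> nat -> 'I_K) d x2 : 'M[R]_J :=
  \matrix_(i, j) (pi_ p j * P1 k p j (e i) d * q21 k p j x2 (e i)).

Lemma joint_q21_mx_unit (e : 'I_J -> nat -> 'I_K) d x2 :
  \matrix_(i, j) (tau k psi j (e i) d * q21 k psi j x2 (e i)) \in unitmx ->
  joint_q21_mx psi e d x2 \in unitmx.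
Proof.
move=> U; pose G i := \sum_m pi_ psi m * P1 k psi m (e i) d.
have GN i : G i != 0.
  have [j] := unitmx_row_neq0 i U; apply: contraNneq => G0.
  by rewrite mxE /tau -/(G i) G0 invr0 mulr0 mul0r.
have -> : joint_q21_mx psi e d x2 = diag_mx (\row_i G i) *m
    \matrix_(i, j) (tau k psi j (e i) d * q21 k psi j x2 (e i)).
  by apply/matrixP => i j; rewrite mul_diag_mx !mxE /tau -/(G i); field.
by rewrite unitmx_mul U unitmx_diag andbT; apply/forallP => i; rewrite mxE.
Qed.

Hypothesis Hq32 : forall j x3 x2, 0 < q32 k psi j x3 x2.

Lemma Dmat_unit x3 x2 : Dmat k psi x3 x2 \in unitmx.
Proof. by rewrite unitmx_diag; apply/forallP => j; rewrite mxE lt0r_neq0. Qed.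

Section DataMatrix.
Variables (a : 'I_J -> nat -> 'I_K) (b : nat -> nat -> 'I_K).

Definition probe_path x2 beta (i : 'I_J) := splice k (a i) (splice k.+1 (fun _ => x2) beta).

(* Row [i] probes the mixture with the past [a i], then [x2] and [x3]; column [0]
   stops at [k+2] and column [l > 0] continues with the future [b l]. *)
Definition data_mx p x2 x3 : 'M[R]_J := \matrix_(i, l)
  (let h := probe_path x2 (splice k.+2 (fun _ => x3) (b l)) i in
   if (l == 0 :> nat) then mixture_pmf T0 p k.+2 h false else mixture_pmf T0 p T h false).

Lemma probe_path_tail x2 beta i m : (k.+2 <= m)%N -> probe_path x2 beta i m = beta m.
Proof. by move=> hm; rewrite /probe_path /splice ifF ?ifF //; lia. Qed.

Lemma head_pmf_probe p j x2 beta i :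
  head_pmf p j (probe_path x2 beta i) = joint_q21_mx p a false x2 i j * q32 k p j (beta k.+2) x2.
Proof.
rewrite /head_pmf joint_pmf_k2 joint_pmf_k1 joint_pmf_k mxE (@probe_path_tail x2 beta i k.+2) //.
have -> : probe_path x2 beta i k.+1 = x2 by rewrite /probe_path /splice ifF ?ifT //; lia.
congr (_ * _ * _); last by rewrite /q21 /probe_path /splice ifT.
by congr (_ * _); apply: eq_P1 => m hm; rewrite /probe_path /splice ifT //; lia.
Qed.

Lemma data_mx_factor p x2 x3 :
  data_mx p x2 x3 = joint_q21_mx p a false x2 *m Dmat k p x3 x2 *m (Lmat T k p b x3)^T.
Proof.
apply/matrixP => i l; rewrite /Dmat mul_mx_diag !mxE /=.
case: ifP => l0; apply: eq_bigr => j _.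
  by rewrite -/(head_pmf p j _) head_pmf_probe !mxE l0 /splice leqnn mulr1.
rewrite joint_pmf_untreated_tail -/(head_pmf p j _) head_pmf_probe !mxE l0 /splice leqnn.
congr (_ * _); rewrite probe_path_tail // /splice leqnn; apply: eq_q43 => m hm.
by rewrite probe_path_tail ?ifF //; lia.
Qed.

Lemma data_mx_eq x2 x3 : data_mx psi x2 x3 = data_mx psi' x2 x3.
Proof. by apply/matrixP => i l; rewrite !mxE /=; case: ifP => _; apply: eq_mixture_pmf; lia. Qed.

Section Transfer.
Variables (x2 x3 : 'I_K).
Hypotheses (HL : Lbar k psi a x2 \in unitmx) (HM : Lmat T k psi b x3 \in unitmx).

Lemma data_mx_unit : data_mx psi x2 x3 \in unitmx.
Proof. by rewrite data_mx_factor !unitmx_mul joint_q21_mx_unit // Dmat_unit unitmx_tr HM. Qed.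

Lemma factors_unit' : [/\ joint_q21_mx psi' a false x2 \in unitmx,
  Dmat k psi' x3 x2 \in unitmx & Lmat T k psi' b x3 \in unitmx].
Proof.
have := data_mx_unit; rewrite data_mx_eq data_mx_factor !unitmx_mul unitmx_tr.
by case/andP => /andP [-> ->] ->.
Qed.

Definition transfer_mx := invmx (joint_q21_mx psi' a false x2) *m joint_q21_mx psi a false x2.

Lemma transfer_mx_factor : transfer_mx *m Dmat k psi x3 x2 *m (Lmat T k psi b x3)^T =
  Dmat k psi' x3 x2 *m (Lmat T k psi' b x3)^T.
Proof.
have [U' _ _] := factors_unit'.
rewrite /transfer_mx -!mulmxA [X in _ *m X]mulmxA.
by rewrite -data_mx_factor data_mx_eq data_mx_factor -!mulmxA mulKmx.
Qed.

Lemma transfer_mx_entry i j : transfer_mx i j * q32 k psi j x3 x2 =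
  q32 k psi' i x3 x2 * ((Lmat T k psi' b x3)^T *m invmx ((Lmat T k psi b x3)^T)) i j.
Proof.
have uLT : (Lmat T k psi b x3)^T \in unitmx by rewrite unitmx_tr.
have E : transfer_mx *m Dmat k psi x3 x2 =
    Dmat k psi' x3 x2 *m ((Lmat T k psi' b x3)^T *m invmx ((Lmat T k psi b x3)^T)).
  by rewrite -(mulmxK uLT (transfer_mx *m _)) transfer_mx_factor mulmxA.
by move/matrixP: E => /(_ i j); rewrite /Dmat mul_mx_diag mul_diag_mx !mxE.
Qed.

Lemma q32'_neq0 i : q32 k psi' i x3 x2 != 0.
Proof.
by have [_ + _] := factors_unit'; rewrite unitmx_diag => /forallP /(_ i); rewrite mxE.
Qed.

End Transfer.

Lemma Lmat_row_mixture p h x3 (l : 'I_J) : h k.+2 = x3 ->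
  \sum_j Lmat T k p b x3 l j * head_pmf p j h =
  if (l == 0 :> nat) then mixture_pmf T0 p k.+2 h false
  else mixture_pmf T0 p T (splice k.+2 h (b l)) false.
Proof.
move=> hx; case: ifP => l0; apply: eq_bigr => j _; rewrite mxE l0 ?mul1r // mulrC.
rewrite joint_pmf_untreated_tail; congr (_ * _).
  by apply: eq_joint_pmf => // m hm; rewrite /splice ifT //; lia.
by rewrite /splice leqnn hx; apply: eq_q43 => m hm; rewrite ifF //; lia.
Qed.

Lemma probe_mx_unit x2 beta : Lbar k psi a x2 \in unitmx ->
  \matrix_(i, m) head_pmf psi m (probe_path x2 beta i) \in unitmx.
Proof.
move=> HL; have -> : \matrix_(i, m) head_pmf psi m (probe_path x2 beta i) =
    joint_q21_mx psi a false x2 *m Dmat k psi (beta k.+2) x2.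
  by apply/matrixP => i m; rewrite /Dmat mul_mx_diag !mxE head_pmf_probe !mxE.
by rewrite unitmx_mul joint_q21_mx_unit // Dmat_unit.
Qed.

Lemma untreated_tail_relabel x2 (sg : 'I_J -> 'I_J) : Lbar k psi a x2 \in unitmx ->
  injective sg -> (forall j h, head_pmf psi j h = head_pmf psi' (sg j) h) ->
  forall h j, q43 T k psi j h (h k.+2) = q43 T k psi' (sg j) h (h k.+2).
Proof.
move=> HL sg_inj Hhead h; apply: (unitmx_lin_inj (probe_mx_unit h HL)) => i.
under eq_bigr do rewrite mxE; under [RHS]eq_bigr do rewrite mxE.
have q43_probe p j :
    q43 T k p j (probe_path x2 h i) (probe_path x2 h i k.+2) = q43 T k p j h (h k.+2).
  by rewrite probe_path_tail //; apply: eq_q43 => m hm; rewrite probe_path_tail //; lia.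
have := eq_mixture_pmf (n := T) (probe_path x2 h i) false ltac:(lia).
rewrite /mixture_pmf [RHS](reindex_inj sg_inj) /=.
under eq_bigr do rewrite joint_pmf_untreated_tail q43_probe.
under [RHS]eq_bigr do rewrite joint_pmf_untreated_tail q43_probe -/(head_pmf _ _ _) -Hhead.
by [].
Qed.

Section Relabel.
Variables (x2c x2b x3 x3b : 'I_K).
Hypotheses (HLc : Lbar k psi a x2c \in unitmx) (HLb : Lbar k psi a x2b \in unitmx).
Hypotheses (HL3 : Lmat T k psi b x3 \in unitmx) (HL3b : Lmat T k psi b x3b \in unitmx).
Hypothesis Hdist : let Mx := Dmat k psi x3 x2c *m invmx (Dmat k psi x3b x2c)
  *m Dmat k psi x3b x2b *m invmx (Dmat k psi x3 x2b) in
  forall j1 j2 : 'I_J, Mx j1 j1 = Mx j2 j2 -> j1 = j2.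

Definition eigen_ratio p j :=
  q32 k p j x3 x2c / q32 k p j x3b x2c * q32 k p j x3b x2b / q32 k p j x3 x2b.

Lemma eigen_ratio_inj : injective (eigen_ratio psi).
Proof.
have nz x3' x2' i : (\row_j q32 k psi j x3' x2') 0 i != 0 by rewrite mxE lt0r_neq0.
move=> j1 j2 e; apply: Hdist.
by rewrite /Dmat !invmx_diag // !mulmx_diag !mxE !eqxx !mulr1n.
Qed.

Local Notation X := (transfer_mx x2c).

Lemma transfer_eigen_ratio i j : X i j != 0 -> eigen_ratio psi j = eigen_ratio psi' i.
Proof.
move=> Xij; have pos := fun x3' x2' => lt0r_neq0 (Hq32 j x3' x2').
exact: (ratio_transfer Xij (pos _ _) (pos _ _) (q32'_neq0 HLb HL3 i) (q32'_neq0 HLc HL3b i)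
  (transfer_mx_entry HLc HL3 i j) (transfer_mx_entry HLb HL3 i j)
  (transfer_mx_entry HLc HL3b i j) (transfer_mx_entry HLb HL3b i j)).
Qed.

Lemma transfer_row_uniq i j j' : X i j != 0 -> X i j' != 0 -> j = j'.
Proof.
by move=> h h'; apply: eigen_ratio_inj; rewrite (transfer_eigen_ratio h) (transfer_eigen_ratio h').
Qed.

Lemma transfer_unit : X \in unitmx.
Proof.
have [U' _ _] := factors_unit' HLc HL3.
by rewrite unitmx_mul unitmx_inv U' joint_q21_mx_unit.
Qed.

Definition relabel j := odflt j [pick i | X i j != 0].

Lemma relabel_neq0 j : X (relabel j) j != 0.
Proof.
rewrite /relabel; case: pickP => [i //|none] /=.
by have [i] := unitmx_col_neq0 j transfer_unit; rewrite none.
Qed.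

Lemma relabel_inj : injective relabel.
Proof. by move=> j1 j2 e; apply: (transfer_row_uniq (relabel_neq0 j1)); rewrite e relabel_neq0. Qed.

Lemma relabel_supp i j : X i j != 0 -> i = relabel j.
Proof.
move=> nz; have /codomP [j' ej] := injF_onto relabel_inj i; rewrite ej in nz *.
by rewrite (transfer_row_uniq nz (relabel_neq0 j')).
Qed.

Lemma Lmat_relabel x3' : Lmat T k psi b x3' \in unitmx ->
  forall l j, Lmat T k psi' b x3' l (relabel j) = Lmat T k psi b x3' l j.
Proof.
move=> HM l j.
have o0 : (0 < J)%N by apply: leq_ltn_trans (leq0n _) (ltn_ord j).
have entry l' : X (relabel j) j * q32 k psi j x3' x2c * Lmat T k psi b x3' l' j =
    q32 k psi' (relabel j) x3' x2c * Lmat T k psi' b x3' l' (relabel j).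
  move/matrixP: (transfer_mx_factor HLc HM) => /(_ (relabel j) l').
  rewrite /Dmat mul_mx_diag_tr_entry mul_diag_tr_entry mxE => <-.
  rewrite (bigD1 j) //= big1 ?addr0 ?mxE // => j' ne.
  have [->|nz] := eqVneq (X (relabel j) j') 0; first by rewrite !mul0r.
  by move: ne; rewrite (relabel_inj (relabel_supp nz)) eqxx.
have L0 p j' : Lmat T k p b x3' (Ordinal o0) j' = 1 by rewrite mxE.
have e0 := entry (Ordinal o0); rewrite !L0 !mulr1 in e0.
by apply: (mulfI (q32'_neq0 HLc HM (relabel j))); rewrite -entry e0.
Qed.

Lemma head_pmf_relabel x3' : Lmat T k psi b x3' \in unitmx ->
  forall h, h k.+2 = x3' -> forall j, head_pmf psi j h = head_pmf psi' (relabel j) h.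
Proof.
move=> HM h hx; apply: (unitmx_lin_inj HM) => l.
rewrite Lmat_row_mixture // [RHS](eq_bigr (fun j => Lmat T k psi' b x3' l (relabel j) *
  head_pmf psi' (relabel j) h)); last by move=> j _; rewrite Lmat_relabel.
have := Lmat_row_mixture psi' l hx; rewrite (reindex_inj relabel_inj) /= => ->.
by case: ifP => _; apply: eq_mixture_pmf; lia.
Qed.

End Relabel.

End DataMatrix.

Definition IDa_at (x3 x3s : 'I_K) :=
  exists (x2c x2b x3b : 'I_K) (a : 'I_J -> nat -> 'I_K) (b : nat -> nat -> 'I_K),
    [/\ Lbar k psi a x2c \in unitmx /\ Lbar k psi a x2b \in unitmx,
        Lmat T k psi b x3 \in unitmx, Lmat T k psi b x3s \in unitmx,
        Lmat T k psi b x3b \in unitmx &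
        let Mx := Dmat k psi x3 x2c *m invmx (Dmat k psi x3b x2c)
                  *m Dmat k psi x3b x2b *m invmx (Dmat k psi x3 x2b) in
        forall j1 j2 : 'I_J, Mx j1 j1 = Mx j2 j2 -> j1 = j2].

Lemma slice_relabel x3 x3s : IDa_at x3 x3s ->
  exists rho : 'I_J -> 'I_J, injective rho /\ forall h, (h k.+2 = x3 \/ h k.+2 = x3s) ->
    forall j, head_pmf psi j h = head_pmf psi' (rho j) h.
Proof.
case=> x2c [x2b [x3b [a [b [[HLc HLb] HL3 HLs HL3b Hd]]]]].
exists (relabel a x2c); split; first exact: relabel_inj HLc HLb HL3 HL3b Hd.
by move=> h [] hx; [apply: (head_pmf_relabel HLc HLb HL3 HL3b Hd HL3) |
  apply: (head_pmf_relabel HLc HLb HL3 HL3b Hd HLs)].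
Qed.

Lemma slice_separates x3 x3s : IDa_at x3 x3s -> forall j1 j2 : 'I_J, j1 != j2 ->
  exists h, h k.+2 = x3 /\ head_pmf psi j1 h != head_pmf psi j2 h.
Proof.
case=> x2c [_ [_ [a [_ [[HLc _] _ _ _ _]]]]] j1 j2 ne.
have [i] := unitmx_col_neq (probe_mx_unit (fun _ => x3) HLc) ne; rewrite !mxE => hi.
by exists (probe_path a x2c (fun _ => x3) i); rewrite probe_path_tail.
Qed.

Lemma head_pmf_relabel_all : (exists x3s, forall x3, IDa_at x3 x3s) ->
  exists rho : 'I_J -> 'I_J, injective rho /\
    forall j h, head_pmf psi j h = head_pmf psi' (rho j) h.
Proof.
case=> x3s Hall; have [rs [rs_inj Hs]] := slice_relabel (Hall x3s).
exists rs; split => // j h.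
have [r [r_inj Hr]] := slice_relabel (Hall (h k.+2)).
suff -> : rs j = r j by apply: Hr; left.
(* [rs] and [r] are both correct on the [x3s]-slice, which separates the types. *)
have [//|ne] := eqVneq (rs j) (r j).
have /codomP [j1 e1] := injF_onto rs_inj (r j).
have nj : j1 != j by apply: contraNneq ne => e; rewrite e1 e.
have [h' [hx' /eqP []]] := slice_separates (Hall x3s) nj.
by rewrite (Hs h' (or_introl hx')) -e1 -(Hr h' (or_intror hx')).
Qed.

Lemma untreated_relabel : (exists x3s, forall x3, IDa_at x3 x3s) ->
  exists sg : 'I_J -> 'I_J, injective sg /\
    forall j h, joint_pmf T0 psi j T h false = joint_pmf T0 psi' (sg j) T h false.
Proof.
move=> Ha; have [sg [sg_inj Hhead]] := head_pmf_relabel_all Ha.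
have [x3s /(_ x3s) [x2c [_ [_ [a [_ [[HLc _] _ _ _ _]]]]]]] := Ha.
exists sg; split => // j h; rewrite !joint_pmf_untreated_tail -!/(head_pmf _ _ _) Hhead.
by rewrite (untreated_tail_relabel HLc sg_inj Hhead).
Qed.

Section TreatedArm.
Variable sg : 'I_J -> 'I_J.
Hypotheses (sg_inj : injective sg)
  (Huntreated : forall j h, joint_pmf T0 psi j T h false = joint_pmf T0 psi' (sg j) T h false)
  (Hpos : forall j h d, joint_pmf T0 psi j T0 h d != 0).

Lemma mixture_relabel n h d : (1 <= n <= T)%N ->
  \sum_j joint_pmf T0 psi j n h d = \sum_j joint_pmf T0 psi' (sg j) n h d.
Proof. by move=> hn; have := eq_mixture_pmf h d hn; rewrite [X in _ = X](reindex_inj sg_inj). Qed.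

Lemma untreated_prefix_relabel j n h : (1 <= n <= T)%N ->
  joint_pmf T0 psi j n h false = joint_pmf T0 psi' (sg j) n h false.
Proof.
move=> hn; apply: (eq_consistent_pmf (f := fun n h => joint_pmf T0 psi j n h false)
  (g := fun n h => joint_pmf T0 psi' (sg j) n h false)) => // [n' h' hn'|n' h' hn'].
- exact: sum_joint_pmfS Ht hn'.
- exact: sum_joint_pmfS Ht' hn'.
Qed.

Lemma joint_pmf_k_neq0 j h d : joint_pmf T0 psi j k h d != 0.
Proof.
have := Hpos j h d; rewrite (joint_pmf_cat _ _ _ _ (m := k)); last by lia.
by rewrite mulf_eq0 negb_or => /andP [].
Qed.

Lemma q21_relabel j h x : q21 k psi j x h = q21 k psi' (sg j) x h.
Proof.
pose h' := splice k h (fun _ => x).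
have q21h' p j' : q21 k p j' (h' k.+1) h' = q21 k p j' x h by rewrite /q21 /h' /splice ltnn leqnn.
have := untreated_prefix_relabel j h' (n := k.+1) ltac:(lia).
rewrite !joint_pmf_k1 !q21h' (untreated_prefix_relabel j h' (n := k)); last by lia.
apply: mulfI; rewrite -untreated_prefix_relabel ?joint_pmf_k_neq0 //; lia.
Qed.

Lemma treated_k_relabel (c : 'I_J -> 'I_K) h :
  \matrix_(i, j) q21 k psi j (c i) h \in unitmx ->
  forall j, joint_pmf T0 psi j k h true = joint_pmf T0 psi' (sg j) k h true.
Proof.
move=> U; apply: (unitmx_lin_inj U) => i.
pose h' := splice k h (fun _ => c i).
have eh p j : joint_pmf T0 p j k.+1 h' true = joint_pmf T0 p j k h true * q21 k p j (c i) h.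
  rewrite joint_pmf_k1 /h' /splice ltnn /q21 leqnn; congr (_ * _).
  by apply: eq_joint_pmf => // m hm; rewrite ifT //; lia.
have := mixture_relabel h' true (n := k.+1) ltac:(lia).
under eq_bigr do rewrite eh; under [RHS]eq_bigr do rewrite eh -q21_relabel.
move=> E; under eq_bigr do rewrite mxE mulrC.
by under [RHS]eq_bigr do rewrite mxE mulrC.
Qed.

Hypothesis Hc : forall xi1 : nat -> 'I_K, exists c : 'I_J -> 'I_K,
  \matrix_(i, j) q21 k psi j (c i) xi1 \in unitmx.
Hypothesis Hd : forall xi2 : 'I_K, exists e : 'I_J -> nat -> 'I_K,
  \matrix_(i, j) (tau k psi j (e i) true * q21 k psi j xi2 (e i)) \in unitmx.

Lemma treated_k1_relabel j h :
  joint_pmf T0 psi j k.+1 h true = joint_pmf T0 psi' (sg j) k.+1 h true.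
Proof. by have [c U] := Hc h; rewrite !joint_pmf_k1 (treated_k_relabel U) q21_relabel. Qed.

Lemma treated_relabel j h : joint_pmf T0 psi j T h true = joint_pmf T0 psi' (sg j) T h true.
Proof.
rewrite !joint_pmf_treated_tail treated_k1_relabel; congr (_ * _); move: j.
have [e /joint_q21_mx_unit U] := Hd (h k.+1).
apply: (unitmx_lin_inj U) => l; pose h' := splice k (e l) h.
have tail p j : treated_tail p j h' = treated_tail p j h.
  by apply: eq_treated_tail => m hm; rewrite /h' /splice ifF //; lia.
have head_eq j : joint_pmf T0 psi j k.+1 h' true = joint_q21_mx psi e true (h k.+1) l j.
  rewrite joint_pmf_k1 joint_pmf_k mxE /q21 /h' /splice ltnn leqnn; congr (_ * _ * _).
  by apply: eq_P1 => m hm; rewrite ifT //; lia.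
have := mixture_relabel h' true (n := T) ltac:(lia).
under eq_bigr do rewrite joint_pmf_treated_tail tail head_eq.
by under [RHS]eq_bigr do rewrite joint_pmf_treated_tail tail -treated_k1_relabel head_eq.
Qed.

End TreatedArm.

Lemma joint_pmf_identified :
  (forall i j : 'I_J, (i < j)%N -> pi_ psi i < pi_ psi j) ->
  (forall i j : 'I_J, (i < j)%N -> pi_ psi' i < pi_ psi' j) ->
  ID T k psi -> (forall j h d, joint_pmf T0 psi j T0 h d != 0) ->
  forall j h d, joint_pmf T0 psi j T h d = joint_pmf T0 psi' j T h d.
Proof.
move=> Hord Hord' [Ha _ Hc Hd] Hpos.
have [sg [sg_inj H0]] := untreated_relabel Ha.
have HT j h d : joint_pmf T0 psi j T h d = joint_pmf T0 psi' (sg j) T h d.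
  by case: d; [exact: treated_relabel | exact: H0].
have Hpi j : pi_ psi j = pi_ psi' (sg j).
  rewrite -(sum_joint_pmf1 _ Ht) -(sum_joint_pmf1 _ Ht').
  apply: eq_bigr => x _; apply: eq_bigr => d _.
  apply: (eq_consistent_pmf (T := T) (f := fun n h => joint_pmf T0 psi j n h d)
    (g := fun n h => joint_pmf T0 psi' (sg j) n h d)) => [n h hn|n h hn|h|]; last by lia.
  - exact: sum_joint_pmfS Ht hn.
  - exact: sum_joint_pmfS Ht' hn.
  - exact: HT.
have sg_mono : {homo sg : i i' / (i < i')%N}.
  move=> i i' lt; have := Hord _ _ lt; rewrite !Hpi; apply: contraTT; rewrite -leqNgt.
  rewrite leq_eqVlt => /orP [/eqP/val_inj ->|/Hord' lt']; first by rewrite ltxx.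
  by rewrite -leNgt ltW.
by move=> j h d; rewrite HT (homo_ord_id sg_mono).
Qed.

End Identification.

Unset Implicit Arguments.

Theorem proposition6 (R : realFieldType) (K J T0 T : nat)
  (hK : (2 <= K)%N) (hJ : (1 <= J)%N) (hT0 : (1 <= T0)%N) (hT : (T0 < T)%N)
  (eps : R) (heps : 0 < eps)
  (M : model R K J) (psi : param R K J) (k : nat)
  (H : prop6_hyps T0 T eps M psi k) :
  (* the representation of the LTATT *)
  (forall (t : nat) (j : 'I_J), (T0 < t <= T)%N ->
     LTATT M t j =
     \sum_(x : 'I_K)
        cPr M (fun w => Xobs T0 M T0 w == x) (fun w => Dm M w && (Zm M w == j)) *:
        (cE M (fun w => onehot (Xobs T0 M t w))
              (fun w => [&& Xobs T0 M T0 w == x, Dm M w & Zm M w == j])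
       - cE M (fun w => onehot (Xobs T0 M t w))
              (fun w => [&& Xobs T0 M T0 w == x, ~~ Dm M w & Zm M w == j])))
  /\
  (* the LTATT is uniquely determined by the pmf of W: any other process
     satisfying the same hypotheses and generating the same pmf of W has the
     same LTATT *)
  (forall (M' : model R K J) (psi' : param R K J) (k' : nat),
     prop6_hyps T0 T eps M' psi' k' ->
     (forall (h : nat -> 'I_K) (d : bool), pW T0 T psi h d = pW T0 T psi' h d) ->
     forall (t : nat) (j : 'I_J), (T0 < t <= T)%N -> LTATT M t j = LTATT M' t j).
Proof.
pose x0 : 'I_K := Ordinal (ltnW hK).
case: H => [[Hprob _ Htr Hcs _] Ht Hord Hg [hk hkT0 hkT HID]].
have repr (M0 : model R K J) (psi0 : param R K J) :
    prob_ok M0 -> generated_by T0 T M0 psi0 -> common_support T0 M0 -> trans_indep T0 T M0 ->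
    forall t j, (T0 < t <= T)%N -> LTATT M0 t j = ltatt_rhs T0 M0 t j.
  by move=> Hp Hg0 Hc Htr0 t j ht; apply: (LTATT_representation x0 hT0 hT j Hp Hg0 Hc ht Htr0).
split; first exact: (repr M psi Hprob Hg Hcs Htr).
move=> M' psi' k' [[Hprob' _ Htr' Hcs' _] Ht' Hord' Hg' _] HpW t j ht.
rewrite (repr M psi) // (repr M' psi') // (ltatt_rhs_lawE x0 hT0 hT Hg j ht).
rewrite (ltatt_rhs_lawE x0 hT0 hT Hg' j ht); apply: eq_ltatt_rhs_law.
have Hmix h d : mixture_pmf T0 psi T h d = mixture_pmf T0 psi' T h d.
  by rewrite -!pW_mixture_pmf.
have [_ [Hq32 _] _ _] := HID.
exact: joint_pmf_identified hk hkT0 hkT Ht Ht' Hmix Hq32 Hord Hord' HID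
  (fun j' => joint_pmf_T0_neq0 x0 hT0 hT j' Hprob Hg Hcs).
Qed.
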